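(* Let $f:[0,\infty]^k\to[0,\infty]$ be subadditive (i.e. $f(\mathbf x+\mathbf y)\le f(\mathbf x)+f(\mathbf y)$ for all $\mathbf x,\mathbf y\in[0,\infty]^k$) and non-decreasing (i.e. $\mathbf x\le\mathbf y$ coordinatewise implies $f(\mathbf x)\le f(\mathbf y)$). If $\pi_1,\ldots,\pi_k$ are arbitrage-free price functions, then $\pi(\mathbf Q)=f(\pi_1(\mathbf Q),\ldots,\pi_k(\mathbf Q))$ is an arbitrage-free price function.
   Context: A query is a pair $(\mathbf q,v)$ with $\mathbf q\in\mathbb R^n$ and $v\in[0,\infty]$. A price function is a map $\pi:\mathbb R^n\times[0,\infty]\to[0,\infty]$. The determinacy relation $\mathbf S\rightarrow\mathbf Q$ between finite multisets of queries and queries is the smallest relation satisfying: (Summation) for every $k\ge 0$, $\{(\mathbf q_1,v_1),\ldots,(\mathbf q_k,v_k)\}\rightarrow(\mathbf q_1+\cdots+\mathbf q_k,\,v_1+\cdots+v_k)$; (Scalar multiplication) for every $c\in\mathbb R$, $\{(\mathbf q,v)\}\rightarrow(c\mathbf q,c^2v)$; (Relaxation) $\{(\mathbf q,v)\}\rightarrow(\mathbf q,v')$ whenever $v\le v'$; (Transitivity) if $\mathbf S_1\rightarrow\mathbf Q_1,\ldots,\mathbf S_k\rightarrow\mathbf Q_k$ and $\{\mathbf Q_1,\ldots,\mathbf Q_k\}\rightarrow\mathbf Q$, then $\mathbf S_1\uplus\cdots\uplus\mathbf S_k\rightarrow\mathbf Q$. A price function $\pi$ is arbitrage-free if for every $m\ge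 1$ and queries $\mathbf Q_1,\ldots,\mathbf Q_m,\mathbf Q$ with $\{\mathbf Q_1,\ldots,\mathbf Q_m\}\rightarrow\mathbf Q$ we have $\pi(\mathbf Q)\le\sum_{i=1}^m\pi(\mathbf Q_i)$. *)

(* R : realType, [0,oo] modelled as nonnegative elements of \bar R. *)
From HB Require Import structures.
From mathcomp Require Import all_boot all_order all_algebra.
From mathcomp Require Import all_classical all_reals.
From Stdlib Require Import Permutation.
Set Implicit Arguments. Unset Strict Implicit. Unset Printing Implicit Defensive.
Import Order.TTheory GRing.Theory Num.Theory.
Local Open Scope ring_scope.
Local Open Scope ereal_scope.

Section Queries.
Variables (R : realType) (n : nat).

Record query := Query {
  qvec : 'rV[R]_n;
  qval : \bar R;
  qval_ge0 : 0 <= qval }.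

Lemma qsum_ge0 (s : seq query) : 0 <= \sum_(Q <- s) qval Q.
Proof. by apply: sume_ge0 => Q _; exact: qval_ge0. Qed.

Definition qsum (s : seq query) : query :=
  @Query (\sum_(Q <- s) qvec Q)%R (\sum_(Q <- s) qval Q) (qsum_ge0 s).

Lemma qscale_ge0 (c : R) (Q : query) : 0 <= ((c ^+ 2)%R)%:E * qval Q.
Proof. by apply: mule_ge0; [rewrite lee_fin sqr_ge0 | exact: qval_ge0]. Qed.

(* Scalar multiplication: (c q, c^2 v)  (convention 0 * oo = 0). *)
Definition qscale (c : R) (Q : query) : query :=
  @Query (c *: qvec Q)%R (((c ^+ 2)%R)%:E * qval Q) (qscale_ge0 c Q).

(* Finite multisets of queries are represented by lists, taken up to permutation. *)
Inductive determines : seq query -> query -> Prop :=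
| det_sum (s : seq query) : determines s (qsum s)
| det_scale (c : R) (Q : query) : determines [:: Q] (qscale c Q)
| det_relax (q : 'rV[R]_n) (v v' : \bar R) (hv : 0 <= v) (hv' : 0 <= v') :
    v <= v' -> determines [:: @Query q v hv] (@Query q v' hv')
| det_trans (ps : seq (seq query * query)) (Q : query) :
    (forall p, List.In p ps -> determines p.1 p.2) ->
    determines (map snd ps) Q ->
    determines (flatten (map fst ps)) Q
| det_perm (S S' : seq query) (Q : query) :
    Permutation S S' -> determines S Q -> determines S' Q.

Definition price_function (pi : query -> \bar R) : Prop :=
  forall Q, 0 <= pi Q.

Definition arbitrage_free (pi : query -> \bar R) : Prop :=
  forall (Qs : seq query) (Q : query),
    (0 < size Qs)%N -> determines Qs Q -> pi Q <= \sum_(Qi <- Qs) pi Qi.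

End Queries.

Definition nonneg_vec (R : realType) (k : nat) (x : 'I_k -> \bar R) : Prop :=
  forall i, 0 <= x i.

From HB Require Import structures.
From mathcomp Require Import all_boot all_order all_algebra.
From mathcomp Require Import all_classical all_reals.
Set Implicit Arguments. Unset Strict Implicit. Unset Printing Implicit Defensive.
Import Order.TTheory GRing.Theory Num.Theory.
Local Open Scope ring_scope.
Local Open Scope ereal_scope.

(* If {Q_1, ..., Q_m} -> Q then each pi_i(Q) <= sum_j pi_i(Q_j); monotonicity of
   f pushes this through f, and subadditivity splits f of the sum over the Q_j. *)

Section SubadditiveFunction.
Variables (R : realType) (k : nat) (f : ('I_k -> \bar R) -> \bar R).
Hypothesis f_subadd : forall x y, nonneg_vec x -> nonneg_vec y ->
  f (fun i => x i + y i) <= f x + f y.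

Lemma nonneg_vec_sum (T : Type) (x : T -> 'I_k -> \bar R) :
  (forall t, nonneg_vec (x t)) ->
  forall s : seq T, nonneg_vec (fun i => \sum_(t <- s) x t i).
Proof. by move=> x_ge0 s i; apply: sume_ge0 => t _; exact: x_ge0. Qed.

(* The list must be nonempty: subadditivity says nothing about f at 0. *)
Lemma subadd_big_cons (T : Type) (x : T -> 'I_k -> \bar R) :
  (forall t, nonneg_vec (x t)) -> forall (a : T) (s : seq T),
  f (fun i => \sum_(t <- a :: s) x t i) <= \sum_(t <- a :: s) f (x t).
Proof.
move=> x_ge0 a s; elim: s a => [|b s IHs] a.
  by rewrite big_seq1; under eq_fun do rewrite big_seq1.
under eq_fun do rewrite big_cons.
rewrite big_cons.
apply: le_trans (f_subadd (x_ge0 a) (nonneg_vec_sum x_ge0 (b :: s))) _.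
by rewrite leeD2l.
Qed.

End SubadditiveFunction.

Theorem proposition5 (R : realType) (n k : nat)
  (f : ('I_k -> \bar R) -> \bar R)
  (f_range : forall x, nonneg_vec x -> 0 <= f x)
  (f_subadd : forall x y, nonneg_vec x -> nonneg_vec y ->
     f (fun i => x i + y i) <= f x + f y)
  (f_mono : forall x y, nonneg_vec x -> nonneg_vec y ->
     (forall i, x i <= y i) -> f x <= f y)
  (pis : 'I_k -> query R n -> \bar R)
  (pis_price : forall i, price_function (pis i))
  (pis_af : forall i, arbitrage_free (pis i)) :
  price_function (fun Q => f (fun i => pis i Q)) /\
  arbitrage_free (fun Q => f (fun i => pis i Q)).
Proof.
have pis_ge0 Q : nonneg_vec (fun i => pis i Q) by move=> i; exact: pis_price.
split=> [Q | [//|Q1 Qs] Q size_gt0 detQ]; first exact: f_range.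
apply: le_trans (subadd_big_cons f_subadd pis_ge0 Q1 Qs).
apply: f_mono => //; first exact: nonneg_vec_sum pis_ge0 _.
by move=> i; exact: pis_af.
Qed.
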